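(* Let $L$ be a finite lattice, $\varphi\in M_1(L)$, and let $\Phi\in M_\infty(\mathcal L)$ satisfy $\Pi(\Phi)=\varphi$. Then $\Phi$ is the Möbius extension of $\varphi$ (that is, $\varphi$ is completely monotone and $\Phi$ equals its Möbius extension) if and only if $\Phi(\langle a,b\rangle^* )=\varphi(a\wedge b)$ for every pair $\{a,b\}$ of elements of $L$.
   Context: $L$ is a finite lattice with order $\le$, meet $\wedge$. For $A\subseteq L$, $\langle A\rangle^*=\{x\in L: x\ge a \text{ for some } a\in A\}$ is the up-set generated by $A$; $\langle a,b\rangle^*=\langle\{a,b\}\rangle^*$ and $\langle a\rangle^*=\langle\{a\}\rangle^*$. $\mathcal L$ is the set of nonempty up-sets (dual order ideals) of $L$, ordered by $U\preceq V$ iff $U\supseteq V$; it is a distributive lattice whose meet is union. For a finite lattice $P$, $\nabla_a\varphi(x)=\varphi(x)-\varphi(x\wedge a)$, successive differences $\nabla_{a_1,\dots,a_n}$ are iterates, and $\varphi$ is completely monotone if all $\nabla_{a_1,\ldots,a_n}\varphi\ge0$ ($n\ge1$). $M_1(L)$ is the set of nonnegative monotone functions on $L$, $M_\infty(L)$ and $M_\infty(\mathcal L)$ the sets of nonnegative completely monotone functions on $L$, resp. on $(\mathcal L,\preceq)$. $\Pi:M_\infty(\mathcal L)\to M_1(L)$ is $\Pi(\Phi)(x)=\Phi(\langle x\rangle^* )$. The Möbius inverse of $\Phi$ on $\mathcal L$ is the unique $F$ with $\Phi(U)=\sum_{V\preceq U}F(V)$. For $\varphi\in M_\infty(L)$ with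 Möbius inverse $f$ (i.e. $\varphi(x)=\sum_{y\le x}f(y)$), its Möbius extension is the function $\Phi(U)=\sum_{V\preceq U}F(V)$ on $\mathcal L$ with $F(\langle x\rangle^* )=f(x)$ for $x\in L$ and $F=0$ on non-principal up-sets. *)

From HB Require Import structures.
From mathcomp Require Import all_boot all_order all_algebra.
From mathcomp Require Import reals.
Set Implicit Arguments. Unset Strict Implicit. Unset Printing Implicit Defensive.
Import Order.TTheory GRing.Theory Num.Theory.
Local Open Scope ring_scope.
Local Open Scope order_scope.

Section Defs.
Context {d : Order.disp_t} {L : finLatticeType d} {R : realType}.

Definition upgen (A : {set L}) : {set L} := [set x | [exists a in A, a <= x]].
Definition up1 (a : L) : {set L} := upgen [set a].
Definition up2 (a b : L) : {set L} := upgen [set a; b].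

Definition is_upset (U : {set L}) : bool :=
  [forall x, forall y, (x \in U) && (x <= y) ==> (y \in U)].
Definition in_calL (U : {set L}) : bool := is_upset U && (U != set0).

Definition nabla {T : Type} (meet : T -> T -> T) (a : T) (phi : T -> R) : T -> R :=
  fun x => phi x - phi (meet x a).
Definition nablas {T : Type} (meet : T -> T -> T) (s : seq T) (phi : T -> R) : T -> R :=
  foldr (nabla meet) phi s.

(* complete monotonicity of phi on the lattice with carrier {x | P x} and meet [meet] *)
Definition completely_monotone_on {T : Type} (P : T -> bool) (meet : T -> T -> T)
  (phi : T -> R) : Prop :=
  forall (s : seq T) (x : T), (0 < size s)%N -> all P s -> P x ->
    0 <= nablas meet s phi x.

Definition M1 (phi : L -> R) : Prop :=
  (forall x, 0 <= phi x) /\ (forall x y, x <= y -> phi x <= phi y).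
Definition Minf_L (phi : L -> R) : Prop :=
  (forall x, 0 <= phi x) /\ completely_monotone_on (fun _ => true) Order.meet phi.
(* M_infty(\mathcal L): order U <= V iff U \supseteq V, meet is union *)
Definition Minf_calL (Phi : {set L} -> R) : Prop :=
  (forall U, in_calL U -> 0 <= Phi U) /\
  completely_monotone_on in_calL (fun U V => U :|: V) Phi.

Definition Pi (Phi : {set L} -> R) : L -> R := fun x => Phi (up1 x).

Definition is_mobius_inverse (phi f : L -> R) : Prop :=
  forall x, phi x = \sum_(y | y <= x) f y.

(* Phi is the Moebius extension of phi: phi is completely monotone and, with f
   the Moebius inverse of phi, Phi(U) = sum_{V <= U} F(V) on \mathcal L, where
   F(<x>^* ) = f x and F = 0 on non-principal up-sets; V <= U means V \supseteq U. *)
Definition is_mobius_extension (phi : L -> R) (Phi : {set L} -> R) : Prop :=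
  Minf_L phi /\
  exists f : L -> R, is_mobius_inverse phi f /\
    forall U, in_calL U ->
      Phi U = \sum_(V : {set L} | in_calL V && (U \subset V))
                 (\sum_(x | V == up1 x) f x).

End Defs.

From HB Require Import structures.
From mathcomp Require Import all_boot all_order all_algebra.
From mathcomp Require Import reals.
Import Order.TTheory GRing.Theory Num.Theory.
Local Open Scope ring_scope.
Local Open Scope order_scope.

(* Let F be the Möbius inverse of Phi on the nonempty up-sets.  Complete
   monotonicity of Phi makes F nonnegative except possibly at the full set:
   differencing along the principal up-sets of the points outside V isolates
   F V.  Now Phi <a,b>^* - Phi <a /\ b>^* is the total mass of F on the
   up-sets containing a and b but not a /\ b, so the condition on pairs forces
   F to vanish on every up-set that is not closed under meets, i.e. on every
   non-principal one.  Hence Phi is the Möbius extension of phi with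
   f x = F <x>^*, and phi is completely monotone because its iterated
   differences are sums of values of f at points that are not the bottom.
   The converse is a direct computation of Phi <a,b>^* from f. *)

Section MobiusInversion.
Variables (T : finType) (R : zmodType) (lt : rel T).
Hypotheses (ltT : transitive lt) (ltI : irreflexive lt).
Variable g : T -> R.

(* [mobius_approx n x] is the Möbius inverse of [g] at [x] as soon as [n]
   exceeds the number of elements below [x]. *)
Fixpoint mobius_approx n x : R :=
  if n is n'.+1 then g x - \sum_(y | lt y x) mobius_approx n' y else g x.

Let height x := #|[set y | lt y x]|.

Lemma height_lt {y x} : lt y x -> (height y < height x)%N.
Proof.
move=> yx; apply: proper_card; apply/properP; split.
  by apply/subsetP=> z; rewrite !inE => zy; apply: ltT zy yx.
by exists y; rewrite !inE ?yx ?ltI.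
Qed.

Lemma mobius_approxS n x : (height x < n)%N -> mobius_approx n.+1 x = mobius_approx n x.
Proof.
elim: n x => [//|n IH] x hx /=.
congr (_ - _); apply: eq_bigr => y yx; apply: IH.
exact: leq_trans (height_lt yx) hx.
Qed.

Lemma mobius_inverse_exists :
  exists F : T -> R, forall x, g x = F x + \sum_(y | lt y x) F y.
Proof.
exists (mobius_approx #|T|.+1) => x /=.
rewrite [X in _ = _ + X](eq_bigr (mobius_approx #|T|)) ?subrK // => y yx.
by apply: mobius_approxS; apply: leq_trans (height_lt yx) (max_card _).
Qed.

End MobiusInversion.

Section NablasOfSum.
Variables (T : Type) (I : finType) (R : realType).
Variables (P : T -> bool) (meet : T -> T -> T) (Q : pred I) (r : T -> I -> bool).
Variables (F : I -> R) (phi : T -> R).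
Hypotheses (Pmeet : forall x a, P x -> P a -> P (meet x a))
  (r_meet : forall x a i, r (meet x a) i = r x i && r a i)
  (phiE : forall x, P x -> phi x = \sum_(i | Q i && r x i) F i).

Lemma nablas_sum s x : all P s -> P x ->
  nablas meet s phi x = \sum_(i | [&& Q i, r x i & all (fun a => ~~ r a i) s]) F i.
Proof.
elim: s x => [|a s IH] x /= => [_ Px|/andP[Pa Ps] Px].
  by rewrite phiE //; apply: eq_bigl => i; rewrite andbT.
rewrite /nabla IH // IH ?Pmeet // (bigID (r a)) /=.
have -> : \sum_(i | [&& Q i, r (meet x a) i & all (fun b => ~~ r b i) s]) F i =
          \sum_(i | [&& Q i, r x i & all (fun b => ~~ r b i) s] && r a i) F i.
  by apply: eq_bigl => i; rewrite r_meet; case: (r a i); rewrite ?andbT ?andbF.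
rewrite [X in X - _]addrC addrK; apply: eq_bigl => i.
by case: (r a i); rewrite ?andbT ?andbF.
Qed.

End NablasOfSum.

Section UpSets.
Context {d : Order.disp_t} {L : finLatticeType d}.
Implicit Types (a b x y : L) (U V : {set L}).

Lemma in_up1 x y : (y \in up1 x) = (x <= y).
Proof.
rewrite inE; apply/existsP/idP => [[a /andP[]]|xy]; first by rewrite inE => /eqP->.
by exists x; rewrite inE eqxx.
Qed.

Lemma in_up2 a b y : (y \in up2 a b) = (a <= y) || (b <= y).
Proof.
rewrite inE; apply/existsP/idP => [[c /andP[]]|/orP[] h].
- by rewrite !inE => /orP[]/eqP-> ->; rewrite ?orbT.
- by exists a; rewrite !inE eqxx h.
- by exists b; rewrite !inE eqxx h orbT.
Qed.

Lemma upset_closed {U x y} : is_upset U -> x \in U -> x <= y -> y \in U.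
Proof. by move=> /forallP/(_ x)/forallP/(_ y)/implyP Uup xU xy; apply: Uup; rewrite xU. Qed.

Lemma upset_up1 x : is_upset (up1 x).
Proof.
apply/forallP => y; apply/forallP => z; apply/implyP => /andP[].
by rewrite !in_up1; apply: le_trans.
Qed.

Lemma calL_up1 x : in_calL (up1 x).
Proof. by rewrite /in_calL upset_up1; apply/set0Pn; exists x; rewrite in_up1. Qed.

Lemma calL_up2 a b : in_calL (up2 a b).
Proof.
apply/andP; split; last by apply/set0Pn; exists a; rewrite in_up2 lexx.
apply/forallP => y; apply/forallP => z; apply/implyP => /andP[].
by rewrite !in_up2 => /orP[] h1 h2; rewrite (le_trans h1 h2) ?orbT.
Qed.

Lemma calL_setU U V : in_calL U -> in_calL V -> in_calL (U :|: V).
Proof.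
move=> /andP[Uup /set0Pn[x xU]] /andP[Vup _]; apply/andP; split.
  apply/forallP => y; apply/forallP => z; apply/implyP => /andP[].
  by rewrite !inE => /orP[] h1 h2; rewrite (upset_closed _ h1 h2) ?orbT.
by apply/set0Pn; exists x; rewrite inE xU.
Qed.

Lemma up1_subset U x : is_upset U -> (up1 x \subset U) = (x \in U).
Proof.
move=> Uup; apply/subsetP/idP => [sub|xU y]; first by apply: sub; rewrite in_up1.
by rewrite in_up1; apply: upset_closed.
Qed.

Lemma up2_subset U a b : is_upset U -> (up2 a b \subset U) = (a \in U) && (b \in U).
Proof.
move=> Uup; apply/subsetP/andP => [sub|[aU bU] y].
  by split; apply: sub; rewrite in_up2 lexx ?orbT.
by rewrite in_up2 => /orP[] h; [apply: upset_closed aU h|apply: upset_closed bU h].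
Qed.

Lemma up1_subset_up1 x y : (up1 y \subset up1 x) = (x <= y).
Proof. by rewrite up1_subset ?upset_up1 // in_up1. Qed.

Lemma up2_subset_up1 a b x : (up2 a b \subset up1 x) = (x <= a `&` b).
Proof. by rewrite up2_subset ?upset_up1 // !in_up1 lexI. Qed.

Lemma up1_inj : injective (@up1 _ L).
Proof. by move=> x y xy; apply/eqP; rewrite eq_le -!up1_subset_up1 xy subxx. Qed.

Lemma sum_principal_supsets {R : nmodType} U (f : L -> R) :
  \sum_(V | in_calL V && (U \subset V)) \sum_(x | V == up1 x) f x =
  \sum_(x | U \subset up1 x) f x.
Proof.
rewrite (exchange_big_dep predT) //= [RHS]big_mkcond; apply: eq_bigr => x _.
case: ifP => Ux; [rewrite (big_pred1 (up1 x)) // | rewrite big_pred0 //] => V /=;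
  by case: eqP => [->|]; rewrite ?andbF ?calL_up1 ?Ux.
Qed.

Lemma nonprincipal_meet_notin V : in_calL V -> (forall x, V != up1 x) ->
  exists a b, [/\ a \in V, b \in V & a `&` b \notin V].
Proof.
move=> /andP[Vup /set0Pn[x0 x0V]] nonprincipal.
have [m mV m_min] := arg_minnP (fun m => #|[set z | z <= m]|) x0V.
have {}mV : m \in V := mV.
case: (boolP [exists v in V, m `&` v \notin V]) => [/existsP[v /andP[vV mvV]]|].
  by exists m, v.
rewrite negb_exists => /forallP meet_in; case/eqP: (nonprincipal m).
apply/eqP; rewrite eqEsubset (up1_subset _ m Vup) mV andbT; apply/subsetP => v vV.
have {meet_in} mvV : m `&` v \in V by have := meet_in v; rewrite vV negbK.
rewrite in_up1 -leIidl; apply: contraT => ne.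
suff : (#|[set z | (z <= m `&` v)%O]| < #|[set z | (z <= m)%O]|)%N by rewrite ltnNge m_min.
apply: proper_card; apply/properP; split.
  by apply/subsetP => z; rewrite !inE => zmv; apply: le_trans zmv (leIl _ _).
by exists m; rewrite !inE ?lexx.
Qed.

End UpSets.

Section MobiusExtension.
Context {d : Order.disp_t} {L : finLatticeType d} {R : realType}.
Implicit Types (phi f : L -> R) (Phi F : {set L} -> R) (U V : {set L}).

Lemma mobius_extension_up2 phi Phi a b :
  is_mobius_extension phi Phi -> Phi (up2 a b) = phi (a `&` b).
Proof.
move=> [_ [f [phiE PhiE]]]; rewrite PhiE ?calL_up2 // sum_principal_supsets phiE.
by apply: eq_bigl => x; rewrite up2_subset_up1.
Qed.

Lemma calL_mobius_inverse_exists Phi : exists F,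
  forall U, in_calL U -> Phi U = \sum_(V | in_calL V && (U \subset V)) F V.
Proof.
pose lt V U := [&& in_calL V, in_calL U & U \proper V].
have ltT : transitive lt.
  move=> V U W /and3P[cU cV UV] /and3P[_ cW VW]; apply/and3P; split => //.
  exact: proper_trans VW UV.
have ltI : irreflexive lt by move=> V; rewrite /lt properxx !andbF.
have [F PhiE] := @mobius_inverse_exists _ _ lt ltT ltI Phi.
exists F => U cU; rewrite PhiE [RHS](bigD1 U) /= ?cU ?subxx //; congr (_ + _).
apply: eq_bigl => V; rewrite /lt cU properEneq eq_sym.
by case: (in_calL V); case: (V != U); case: (U \subset V).
Qed.

Lemma mobius_inverse_completely_monotone phi f : is_mobius_inverse phi f ->
  (forall a y, ~~ (y <= a) -> 0 <= f y) ->
  completely_monotone_on (fun _ => true) Order.meet phi.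
Proof.
move=> phiE f_ge0 [//|a s] x _ _ _.
rewrite (@nablas_sum _ _ _ (fun _ => true) Order.meet predT (fun x y => y <= x) f)
  ?all_predT => //; last by move=> *; apply: lexI.
by apply: sumr_ge0 => y /and3P[_ _ /andP[ay _]]; apply: f_ge0 ay.
Qed.

Section OnCalL.
Context {Phi F : {set L} -> R}.
Hypothesis PhiE :
  forall U, in_calL U -> Phi U = \sum_(V | in_calL V && (U \subset V)) F V.

Lemma nablas_calL s U : all in_calL s -> in_calL U ->
  nablas (fun U V => U :|: V) s Phi U =
  \sum_(V | [&& in_calL V, U \subset V & all (fun W : {set L} => ~~ (W \subset V)) s]) F V.
Proof. by apply: nablas_sum => //; [exact: calL_setU | move=> *; rewrite subUset]. Qed.

Lemma calL_mobius_ge0 {V} : Minf_calL Phi -> in_calL V -> V != setT -> 0 <= F V.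
Proof.
move=> [_ Phi_cm] cV VnT; have /andP[Vup _] := cV.
have [_ [x0 _ x0V]] := properP (etrans (properT V) VnT).
pose s := [seq up1 x | x in ~: V].
have s_gt0 : (0 < size s)%N.
  by rewrite size_map -cardE card_gt0; apply/set0Pn; exists x0; rewrite inE.
have s_calL : all in_calL s by apply/allP => W0 /mapP[x _ ->]; apply: calL_up1.
have := Phi_cm s V s_gt0 s_calL cV; rewrite nablas_calL // (big_pred1 V) // => W /=.
apply/idP/eqP => [/and3P[/andP[Wup _] VW /allP sW]|->]; last first.
  rewrite cV subxx; apply/allP => W0 /mapP[x]; rewrite mem_enum inE => xV ->.
  by rewrite up1_subset.
apply/eqP; rewrite eqEsubset VW andbT; apply/subsetP => x xW; apply: contraT => xV.
by have := sW (up1 x); rewrite up1_subset // xW; apply; apply: map_f; rewrite mem_enum inE.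
Qed.

Lemma calL_mobius_nonprincipal_eq0 {V} : Minf_calL Phi ->
  (forall a b, Phi (up2 a b) = Phi (up1 (a `&` b))) ->
  in_calL V -> (forall x, V != up1 x) -> F V = 0.
Proof.
move=> Phi_minf Phi_up2 cV nonprincipal; have /andP[Vup _] := cV.
have [a [b [aV bV abV]]] := nonprincipal_meet_notin _ cV nonprincipal.
have := Phi_up2 a b; rewrite !PhiE ?calL_up2 ?calL_up1 //.
rewrite (bigID (fun W : {set L} => up1 (a `&` b) \subset W)) /=.
rewrite (eq_bigl (fun W : {set L} => in_calL W && (up1 (a `&` b) \subset W))) => [|W].
  move=> /eqP; rewrite -subr_eq0 addrAC subrr add0r => /eqP mass0.
  apply: (psumr_eq0P _ mass0); last by rewrite cV up2_subset // aV bV up1_subset.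
  move=> W /andP[/andP[cW _] abW]; apply: calL_mobius_ge0 => //.
  by apply: contra abW => /eqP->; apply: subsetT.
case cW: (in_calL W) => //=; have /andP[Wup _] := cW.
rewrite up2_subset // up1_subset //; case abW: (a `&` b \in W); rewrite ?andbF //.
by rewrite andbT !(upset_closed Wup abW) ?leIl ?leIr.
Qed.

Lemma calL_mobius_principal {U} : Minf_calL Phi ->
  (forall a b, Phi (up2 a b) = Phi (up1 (a `&` b))) -> in_calL U ->
  Phi U = \sum_(V | in_calL V && (U \subset V)) \sum_(x | V == up1 x) F (up1 x).
Proof.
move=> Phi_minf Phi_up2 cU; rewrite PhiE //; apply: eq_bigr => V /andP[cV _].
case: (pickP (fun x => V == up1 x)) => [x /eqP-> | nonprincipal].
  by rewrite (big_pred1 x) // => y /=; rewrite (inj_eq up1_inj) eq_sym.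
rewrite big_pred0 // (calL_mobius_nonprincipal_eq0 Phi_minf Phi_up2 cV) // => x.
exact: negbT (nonprincipal x).
Qed.

End OnCalL.
End MobiusExtension.

Theorem proposition3p5 (d : Order.disp_t) (L : finLatticeType d) (R : realType)
  (phi : L -> R) (Phi : {set L} -> R) :
  M1 phi -> Minf_calL Phi -> (forall x, Pi Phi x = phi x) ->
  (is_mobius_extension phi Phi <->
   forall a b : L, Phi (up2 a b) = phi (a `&` b)).
Proof.
move=> [phi_ge0 _] Phi_minf PiE; split=> [ext a b|Phi_up2].
  exact: mobius_extension_up2.
have {}Phi_up2 a b : Phi (up2 a b) = Phi (up1 (a `&` b)) by rewrite Phi_up2 -PiE.
have [F PhiE] := calL_mobius_inverse_exists Phi.
have PhiE' := calL_mobius_principal PhiE Phi_minf Phi_up2.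
pose f x := F (up1 x).
have phiE : is_mobius_inverse phi f.
  move=> x; rewrite -PiE /Pi PhiE' ?calL_up1 // sum_principal_supsets.
  by apply: eq_bigl => y; rewrite up1_subset_up1.
split; last by exists f; split.
split=> //; apply: mobius_inverse_completely_monotone phiE _ => a y ay.
apply: (calL_mobius_ge0 PhiE Phi_minf (calL_up1 y)).
by apply: contra ay => /eqP upT; rewrite -in_up1 upT inE.
Qed.
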